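(* Under the standing setup with $\mathrm{Var}(X_N)>0$: (i) if $\delta_W\ge 0$, then $D\in[D^-_{MOB},\min\{D^+_{MOB},D_{ER}\}]$; (ii) if $\delta_W\le 0$, then $D\in[\max\{D^-_{MOB},D_{ER}\},D^+_{MOB}]$; (iii) the bounds in (i) and (ii) are sharp under the respective sign assumption (absent additional information).
   Context: Let $(X,Y,N)$ be a random triple with $X\in\{0,1\}$, $Y$ real-valued, $N$ taking values in a finite set $\mathcal N$. Write $p_n=\Pr(N=n)$, $X_n=\mathbb E[X\mid N=n]$, $Y_n=\mathbb E[Y\mid N=n]$, $X_N=\mathbb E[X\mid N]$, $Y_N=\mathbb E[Y\mid N]$. Assume some $n$ has $p_n>0$ and $X_n\in(0,1)$, and fix reals $\underline Y\le\overline Y$ with $\mathbb E[Y\mid X=x,N=n]\in[\underline Y,\overline Y]$ whenever $\Pr(X=x,N=n)>0$. $D=\mathbb E[Y\mid X=1]-\mathbb E[Y\mid X=0]$; $\delta_W=\mathbb E[\mathrm{Cov}(Y,X_N\mid X)]$; $D_{ER}=\mathrm{Cov}(Y_N,X_N)/\mathrm{Var}(X_N)$; $D^+_{MOB}=\big(\mathbb E[\min\{Y_N-\underline Y(1-X_N),\overline Y X_N\}]-\mathbb E[X]\mathbb E[Y]\big)/\mathrm{Var}(X)$, $D^-_{MOB}=\big(\mathbb E[Y](1-\mathbb E[X])-\mathbb E[\min\{Y_N-\underline Y X_N,\overline Y(1-X_N)\}]\big)/\mathrm{Var}(X)$. Sharpness under an assumption $\mathcal A$: the parameter lies in the interval for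 every joint distribution satisfying the standing assumptions and $\mathcal A$, and every value in the interval is attained by some joint distribution of $(X,Y,N)$ with the same observed $(p_n,X_n,Y_n)_n$, satisfying the standing bound and $\mathcal A$. *)

From HB Require Import structures.
From mathcomp Require Import all_boot all_order all_algebra.
From mathcomp Require Import all_classical all_reals all_analysis.
Set Implicit Arguments. Unset Strict Implicit. Unset Printing Implicit Defensive.
Import Order.TTheory GRing.Theory Num.Theory.
Local Open Scope classical_set_scope.
Local Open Scope ring_scope.

Section Defs.
Context {R : realType} {I : finType} {d : measure_display} {T : measurableType d}.
Variable (P : probability T R).

Definition Pr (A : set T) : R := fine (P A).
Definition Ex (f : T -> R) : R := fine ('E_P[f])%E.
Definition condE (A : set T) (f : T -> R) : R :=
  Ex (fun w => f w * \1_A w) / Pr A.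
Definition condCov (A : set T) (f g : T -> R) : R :=
  condE A (fun w => f w * g w) - condE A f * condE A g.
Definition Cov (f g : T -> R) : R := fine (covariance P f g).
Definition Var (f : T -> R) : R := fine (variance P f).

Variables (X : T -> bool) (Y : T -> R) (N : T -> I) (Ylow Yhigh : R).

Definition evX (x : bool) : set T := X @^-1` [set x].
Definition evN (n : I) : set T := N @^-1` [set n].
Definition Xr : T -> R := fun w => (X w)%:R.

Definition p_ (n : I) : R := Pr (evN n).
Definition X_ (n : I) : R := condE (evN n) Xr.
Definition Y_ (n : I) : R := condE (evN n) Y.
Definition XN : T -> R := fun w => X_ (N w).
Definition YN : T -> R := fun w => Y_ (N w).

Definition Dpar : R := condE (evX true) Y - condE (evX false) Y.
Definition deltaW : R := Ex (fun w => condCov (evX (X w)) Y XN).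
Definition D_ER : R := Cov YN XN / Var XN.
Definition D_MOB_plus : R :=
  (Ex (fun w => Num.min (YN w - Ylow * (1 - XN w)) (Yhigh * XN w))
     - Ex Xr * Ex Y) / Var Xr.
Definition D_MOB_minus : R :=
  (Ex Y * (1 - Ex Xr)
     - Ex (fun w => Num.min (YN w - Ylow * XN w) (Yhigh * (1 - XN w)))) / Var Xr.

Definition standing : Prop :=
  [/\ (forall x, measurable (evX x)),
      (forall n, measurable (evN n)),
      measurable_fun setT Y,
      P.-integrable setT (EFin \o Y) &
      [/\
      (exists n, 0 < p_ n /\ 0 < X_ n < 1),
      Ylow <= Yhigh &
      (forall x n, 0 < Pr (evX x `&` evN n) ->
         Ylow <= condE (evX x `&` evN n) Y <= Yhigh)]].

End Defs.

From HB Require Import structures.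
From mathcomp Require Import all_boot all_order all_algebra.
From mathcomp Require Import all_classical all_reals all_analysis.
From mathcomp Require Import measurable_realfun ring lra.
Import Order.TTheory GRing.Theory Num.Theory.
Local Open Scope classical_set_scope.
Local Open Scope ring_scope.

(* Every quantity involved is a function of the cell data
   q_x(n) = Pr(X = x, N = n) and s_x(n) = E[Y; X = x, N = n].  In these terms
   Cov(Y_N, X_N) splits as D Var(X_N) + delta_W (between- plus within-group
   covariance), so when Var(X_N) > 0 the sign of delta_W is the sign of
   D_ER - D.  Next, D, D^+_MOB and D^-_MOB are one increasing affine function of
   t = sum_n s_1(n), evaluated at its actual value and at its largest and
   smallest values subject to fixed Y_n and cell means in [Ylow, Yhigh]; these
   extremes are taken cell by cell.  Conversely every t in between is reached by
   interpolating all cells between their extremes with a common weight, and a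
   response that is constant on each cell realizes it with the same
   (p_n, X_n, Y_n), hence the same D_ER: this is sharpness. *)

Lemma exists_sum_between {R : realFieldType} {I : finType} (lo hi : I -> R) t :
  (forall n, lo n <= hi n) -> \sum_n lo n <= t <= \sum_n hi n ->
  exists f : I -> R, (forall n, lo n <= f n <= hi n) /\ \sum_n f n = t.
Proof.
move=> lo_hi /andP[lo_t t_hi].
set L := \sum_n lo n in lo_t; set H := \sum_n hi n in t_hi.
have [th [th_ge0 th_le1 thE]] : exists th, [/\ 0 <= th, th <= 1 & th * (H - L) = t - L].
  have [HL|HL] := eqVneq (H - L) 0; first by exists 0; split => //; lra.
  have HL_gt0 : 0 < H - L by rewrite lt_neqAle eq_sym HL; lra.
  exists ((t - L) / (H - L)); split; last by rewrite divfK.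
    by apply: divr_ge0; lra.
  by rewrite ler_pdivrMr // mul1r; lra.
exists (fun n => lo n + th * (hi n - lo n)); split.
  move=> n; have lohi := lo_hi n.
  have up_ge0 : 0 <= th * (hi n - lo n) by apply: mulr_ge0; lra.
  have down_ge0 : 0 <= (1 - th) * (hi n - lo n) by apply: mulr_ge0; lra.
  by apply/andP; split; lra.
by rewrite big_split /= -mulr_sumr sumrB -/L -/H thE; ring.
Qed.

(** * Cell algebra *)

(* [q1 n], [q0 n] stand for Pr(X = 1, N = n), Pr(X = 0, N = n) and [s1 n], [s0 n]
   for E[Y; X = 1, N = n], E[Y; X = 0, N = n]; [cell_share], [cell_mean] are then
   X_n and Y_n. *)
Section CellAlgebraDefs.
Context {R : realFieldType} {I : finType}.
Variables (Ylow Yhigh : R) (q1 q0 s1 s0 : I -> R).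

Definition cell_weight n := q1 n + q0 n.
Definition cell_share n := q1 n / cell_weight n.
Definition cell_mean n := (s1 n + s0 n) / cell_weight n.
Definition mass1 := \sum_n q1 n.
Definition total := \sum_n (s1 n + s0 n).

Definition weighted_mean (f : I -> R) := \sum_n f n * cell_weight n.
Definition weighted_cov (f g : I -> R) :=
  \sum_n (f n - weighted_mean f) * (g n - weighted_mean g) * cell_weight n.

Definition group_cov (q s : I -> R) :=
  (\sum_n cell_share n * s n) / (\sum_n q n)
  - (\sum_n s n) / (\sum_n q n) * ((\sum_n cell_share n * q n) / (\sum_n q n)).
Definition within_cov :=
  group_cov q1 s1 * \sum_n q1 n + group_cov q0 s0 * \sum_n q0 n.
Definition diff_means := (\sum_n s1 n) / (\sum_n q1 n) - (\sum_n s0 n) / (\sum_n q0 n).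

(* D as a function of t = E[Y; X = 1]: (t - Pr(X = 1) E[Y]) / Var(X). *)
Definition slope_at t := (t - mass1 * total) / (mass1 * (1 - mass1)).

Definition mob_plus_term n :=
  Num.min (cell_mean n - Ylow * (1 - cell_share n)) (Yhigh * cell_share n).
Definition mob_minus_term n :=
  Num.min (cell_mean n - Ylow * cell_share n) (Yhigh * (1 - cell_share n)).

(* The range of [s1 n] once [s1 n + s0 n] is fixed and both cell means lie in
   [Ylow, Yhigh]. *)
Definition cell_lo n := Num.max (Ylow * q1 n) (s1 n + s0 n - Yhigh * q0 n).
Definition cell_hi n := Num.min (Yhigh * q1 n) (s1 n + s0 n - Ylow * q0 n).

End CellAlgebraDefs.

Section CellAlgebra.
Context {R : realFieldType} {I : finType} {Ylow Yhigh : R} {q1 q0 s1 s0 : I -> R}.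

Local Notation cell_weight := (cell_weight q1 q0).
Local Notation cell_share := (cell_share q1 q0).
Local Notation cell_mean := (cell_mean q1 q0 s1 s0).
Local Notation mass1 := (mass1 q1).
Local Notation total := (total s1 s0).
Local Notation weighted_mean := (weighted_mean q1 q0).
Local Notation weighted_cov := (weighted_cov q1 q0).
Local Notation within_cov := (within_cov q1 q0 s1 s0).
Local Notation diff_means := (diff_means q1 q0 s1 s0).
Local Notation slope_at := (slope_at q1 s1 s0).
Local Notation mob_plus_term := (mob_plus_term Ylow Yhigh q1 q0 s1 s0).
Local Notation mob_minus_term := (mob_minus_term Ylow Yhigh q1 q0 s1 s0).
Local Notation cell_lo := (cell_lo Ylow Yhigh q1 q0 s1 s0).
Local Notation cell_hi := (cell_hi Ylow Yhigh q1 q0 s1 s0).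

Hypotheses (q1_ge0 : forall n, 0 <= q1 n) (q0_ge0 : forall n, 0 <= q0 n)
  (s1_bound : forall n, Ylow * q1 n <= s1 n <= Yhigh * q1 n)
  (s0_bound : forall n, Ylow * q0 n <= s0 n <= Yhigh * q0 n)
  (weight_sum : \sum_n cell_weight n = 1).

Lemma cell_weight_ge0 n : 0 <= cell_weight n.
Proof. exact: addr_ge0. Qed.

Lemma cell_weight_eq0 n : cell_weight n = 0 -> [/\ q1 n = 0, q0 n = 0 & s1 n + s0 n = 0].
Proof.
rewrite /cell_weight => w0; have := q1_ge0 n; have := q0_ge0 n => ? ?.
have e1 : q1 n = 0 by lra.
have e0 : q0 n = 0 by lra.
move: (s1_bound n) (s0_bound n); rewrite e1 e0 !mulr0 => /andP[? ?] /andP[? ?].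
by split => //; lra.
Qed.

Lemma cell_shareK n : cell_share n * cell_weight n = q1 n.
Proof.
have [w0|w0] := eqVneq (cell_weight n) 0; last exact: divfK.
by have [-> _ _] := cell_weight_eq0 n w0; rewrite w0 mulr0.
Qed.

Lemma cell_meanK n : cell_mean n * cell_weight n = s1 n + s0 n.
Proof.
have [w0|w0] := eqVneq (cell_weight n) 0; last exact: divfK.
by have [_ _ ->] := cell_weight_eq0 n w0; rewrite w0 mulr0.
Qed.

Lemma mass0E : \sum_n q0 n = 1 - mass1.
Proof. by rewrite -weight_sum /cell_weight big_split /= /mass1; ring. Qed.

Lemma weighted_mean_share : weighted_mean cell_share = mass1.
Proof. by apply: eq_bigr => n _; rewrite cell_shareK. Qed.

Lemma weighted_mean_mean : weighted_mean cell_mean = total.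
Proof. by apply: eq_bigr => n _; rewrite cell_meanK. Qed.

Lemma weighted_cov_share :
  weighted_cov cell_share cell_share = \sum_n cell_share n * q1 n - mass1 ^+ 2.
Proof.
rewrite /weighted_cov weighted_mean_share.
transitivity (\sum_n (cell_share n * q1 n - 2 * mass1 * q1 n + mass1 ^+ 2 * cell_weight n)).
  apply: eq_bigr => n _; rewrite -cell_shareK; ring.
by rewrite !big_split /= sumrN -!mulr_sumr weight_sum -/mass1; ring.
Qed.

Lemma weighted_cov_mean_share : weighted_cov cell_mean cell_share =
  \sum_n cell_share n * (s1 n + s0 n) - total * mass1.
Proof.
rewrite /weighted_cov weighted_mean_share weighted_mean_mean.
transitivity (\sum_n (cell_share n * (s1 n + s0 n) - mass1 * (s1 n + s0 n)
                      - total * q1 n + total * mass1 * cell_weight n)).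
  apply: eq_bigr => n _; rewrite -cell_shareK -cell_meanK; ring.
by rewrite !big_split /= !sumrN -!mulr_sumr weight_sum -/mass1 -/total; ring.
Qed.

Lemma cov_decomposition : 0 < mass1 < 1 ->
  weighted_cov cell_mean cell_share =
  diff_means * weighted_cov cell_share cell_share + within_cov.
Proof.
move=> /andP[m_gt0 m_lt1].
have share0 : \sum_n cell_share n * q0 n = mass1 - \sum_n cell_share n * q1 n.
  rewrite /mass1 -sumrB; apply: eq_bigr => n _.
  by have := cell_shareK n; rewrite /cell_weight => e; lra.
rewrite weighted_cov_mean_share weighted_cov_share /within_cov /diff_means /group_cov.
under eq_bigr => n _ do rewrite mulrDr.
rewrite big_split /= share0 mass0E /total big_split /=.
set B1 := \sum_n _ * s1 n; set B0 := \sum_n _ * s0 n.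
set A1 := \sum_n _ * q1 n; rewrite -/mass1.
by field; rewrite !lt0r_neq0 //; lra.
Qed.

Lemma diff_meansE : 0 < mass1 < 1 -> diff_means = slope_at (\sum_n s1 n).
Proof.
move=> /andP[m_gt0 m_lt1]; rewrite /diff_means /slope_at mass0E /total big_split /= -/mass1.
by field; rewrite !lt0r_neq0 //; lra.
Qed.

Lemma ler_slope_at t t' : 0 < mass1 < 1 -> (slope_at t <= slope_at t') = (t <= t').
Proof.
by move=> /andP[m_gt0 m_lt1]; rewrite ler_pM2r ?invr_gt0 ?mulr_gt0 ?subr_gt0 // lerD2r.
Qed.

Lemma slope_atK D : 0 < mass1 < 1 -> slope_at (D * (mass1 * (1 - mass1)) + mass1 * total) = D.
Proof.
by move=> /andP[m_gt0 m_lt1]; rewrite /slope_at addrK mulfK // mulf_neq0 ?lt0r_neq0 ?subr_gt0.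
Qed.

Lemma cell_lo_le_s1 n : cell_lo n <= s1 n.
Proof.
by move: (s1_bound n) (s0_bound n) => /andP[? ?] /andP[? ?]; rewrite ge_max; apply/andP; split; lra.
Qed.

Lemma s1_le_cell_hi n : s1 n <= cell_hi n.
Proof.
by move: (s1_bound n) (s0_bound n) => /andP[? ?] /andP[? ?]; rewrite le_min; apply/andP; split; lra.
Qed.

Lemma mob_upper_cells : weighted_mean mob_plus_term = \sum_n cell_hi n.
Proof.
apply: eq_bigr => n _; rewrite minr_pMl ?cell_weight_ge0 // minC /cell_hi.
congr Num.min; first by rewrite -mulrA cell_shareK.
transitivity (cell_mean n * cell_weight n - Ylow * (cell_weight n - cell_share n * cell_weight n)).
  by ring.
by rewrite cell_meanK cell_shareK /cell_weight; ring.
Qed.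

Lemma mob_lower_cells : weighted_mean mob_minus_term = total - \sum_n cell_lo n.
Proof.
rewrite /weighted_mean /total -sumrB; apply: eq_bigr => n _; rewrite minr_pMl ?cell_weight_ge0 //.
have -> : (cell_mean n - Ylow * cell_share n) * cell_weight n = s1 n + s0 n - Ylow * q1 n.
  by rewrite mulrBl cell_meanK -mulrA cell_shareK.
have -> : Yhigh * (1 - cell_share n) * cell_weight n = Yhigh * q0 n.
  transitivity (Yhigh * (cell_weight n - cell_share n * cell_weight n)); first by ring.
  by rewrite cell_shareK /cell_weight; ring.
rewrite /cell_lo; set s := s1 n + s0 n.
by case: (lerP (Ylow * q1 n) (s - Yhigh * q0 n)); case: (lerP (s - Ylow * q1 n) (Yhigh * q0 n));
  lra.
Qed.

Lemma cell_split_between t : \sum_n cell_lo n <= t <= \sum_n cell_hi n ->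
  exists s1' s0' : I -> R,
  [/\ forall n, Ylow * q1 n <= s1' n <= Yhigh * q1 n,
      forall n, Ylow * q0 n <= s0' n <= Yhigh * q0 n,
      forall n, s1' n + s0' n = s1 n + s0 n &
      \sum_n s1' n = t].
Proof.
have lo_hi n : cell_lo n <= cell_hi n by apply: le_trans (cell_lo_le_s1 n) (s1_le_cell_hi n).
move=> /(exists_sum_between _ _ _ lo_hi)[f [f_bound f_sum]].
exists f, (fun n => s1 n + s0 n - f n); split => // [n|n|n]; last by ring.
- by move: (f_bound n); rewrite ge_max le_min => /andP[/andP[? ?] /andP[? ?]]; lra.
- by move: (f_bound n); rewrite ge_max le_min => /andP[/andP[? ?] /andP[? ?]]; lra.
Qed.

End CellAlgebra.

(** * Expectations of functions of the cell *)

Lemma sumr_delta {R : pzSemiRingType} {I : finType} (F : I -> R) n :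
  \sum_m (m == n)%:R * F m = F n.
Proof. by rewrite (bigD1 n) //= big1 ?eqxx ?mul1r ?addr0 // => m /negbTE ->; rewrite mul0r. Qed.

Section CellDefs.
Context {R : realType} {I : finType} {d : measure_display} {T : measurableType d}.
Variables (P : probability T R) (X : T -> bool) (N : T -> I).

Definition cell n x : set T := evX X x `&` evN N n.
Definition cell_prob n x := Pr P (cell n x).
Definition cell_int (Z : T -> R) n x := Ex P (fun w => Z w * \1_(cell n x) w).

End CellDefs.

Section Cells.
Context {R : realType} {I : finType} {d : measure_display} {T : measurableType d}.
Variable P : probability T R.
Context {X : T -> bool} {N : T -> I}.
Hypotheses (mX : forall x, measurable (evX X x)) (mN : forall n, measurable (evN N n)).

Local Notation cell := (cell X N).
Local Notation cell_prob := (cell_prob P X N).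
Local Notation cell_int := (cell_int P X N).
Local Notation q1 := (cell_prob ^~ true).
Local Notation q0 := (cell_prob ^~ false).

Lemma measurable_cell n x : measurable (cell n x).
Proof. exact: measurableI. Qed.

Lemma indic_cell w n x : \1_(cell n x) w = ((X w == x) && (N w == n))%:R :> R.
Proof.
rewrite indicE; congr (nat_of_bool _)%:R; apply/idP/idP; rewrite inE.
  by case=> /= -> ->; rewrite !eqxx.
by case/andP=> /eqP ? /eqP ?.
Qed.

Lemma indic_evN w n : \1_(evN N n) w = (N w == n)%:R :> R.
Proof. by rewrite indicE; congr (nat_of_bool _)%:R; apply/idP/eqP; rewrite inE. Qed.

Lemma indic_evX w x : \1_(evX X x) w = (X w == x)%:R :> R.
Proof. by rewrite indicE; congr (nat_of_bool _)%:R; apply/idP/eqP; rewrite inE. Qed.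

Lemma cell_fun_expand (h : I -> bool -> R) (Z : T -> R) w :
  h (N w) (X w) * Z w = \sum_n (h n true * (Z w * \1_(cell n true) w) +
                                h n false * (Z w * \1_(cell n false) w)).
Proof.
rewrite (bigD1 (N w)) //= big1 ?addr0 => [|n /negbTE nN]; last first.
  by rewrite !indic_cell [N w == n]eq_sym nN !andbF !mulr0 addr0.
by rewrite !indic_cell !eqxx !andbT; case: (X w); rewrite /= ?mulr1 ?mulr0 ?addr0 ?add0r.
Qed.

Lemma integrable_mul_indic_cell (Z : T -> R) n x : P.-integrable setT (EFin \o Z) ->
  P.-integrable setT (EFin \o (fun w => Z w * \1_(cell n x) w)).
Proof.
move=> iZ; have mI := measurable_indic (R := R) (D := setT) (measurable_cell n x).
apply: eq_integrable (integrableMl measurableT iZ mI _) => //.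
exists 1; split => // y y1 z _ /=; rewrite indicE.
by case: (z \in cell n x); rewrite /= ?normr0 ?normr1; lra.
Qed.

Lemma expect_cellwise (Z f : T -> R) (h : I -> bool -> R) :
  P.-integrable setT (EFin \o Z) -> (forall w, f w = h (N w) (X w) * Z w) ->
  Ex P f = \sum_n (h n true * cell_int Z n true + h n false * cell_int Z n false).
Proof.
move=> iZ /funext ->; have iZc n x := integrable_mul_indic_cell Z n x iZ.
rewrite /Ex unlock; under eq_integral => w _ do rewrite cell_fun_expand -sumEFin.
rewrite integral_sum //; last first.
  move=> n; under eq_fun => w do rewrite EFinD (EFinM (h n true)) (EFinM (h n false)).
  by apply: integrableD => //; apply: integrableZl => //; exact: iZc.
transitivity (fine (\sum_n (h n true * cell_int Z n true + h n false * cell_int Z n false)%:E)%E).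
  congr fine; apply: eq_bigr => n _.
  under eq_integral => w _ do rewrite EFinD (EFinM (h n true)) (EFinM (h n false)).
  rewrite integralD //; try by apply: integrableZl => //; exact: iZc.
  rewrite !integralZl //; try exact: iZc.
  rewrite /cell_int /Ex unlock EFinD !EFinM !fineK //;
    by apply: integrable_fin_num => //; exact: iZc.
by rewrite sumEFin.
Qed.

Lemma cell_prob_ge0 n x : 0 <= cell_prob n x.
Proof. exact: fine_ge0. Qed.

Lemma Pr_expect A : measurable A -> Pr P A = Ex P (\1_A).
Proof. by move=> mA; rewrite /Pr /Ex expectation_indic. Qed.

Lemma integrable_cst1 : P.-integrable setT (EFin \o (fun=> 1 : R)).
Proof. exact: finite_measure_integrable_cst. Qed.

Lemma cell_int1 n x : cell_int (fun=> 1) n x = cell_prob n x.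
Proof.
rewrite /cell_int /cell_prob Pr_expect; last exact: measurable_cell.
by congr Ex; apply: funext => w; rewrite mul1r.
Qed.

Lemma cell_int_null (Z : T -> R) n x :
  measurable_fun setT Z -> cell_prob n x = 0 -> cell_int Z n x = 0.
Proof.
move=> mZ q0; have mI := measurable_indic (R := R) (D := setT) (measurable_cell n x).
have P0 : P (cell n x) = 0%E.
  apply/eqP; rewrite -fine_eq0; first exact/eqP.
  exact: fin_num_measure (measurable_cell n x).
rewrite /cell_int /Ex unlock (ae_eq_integral (cst 0%E)) ?integral0 //.
  by apply/measurable_EFinP; apply: measurable_funM.
exists (cell n x); split => //; first exact: measurable_cell.
by move=> w /= w_ne; apply: contrapT => w_out; apply: w_ne => _; rewrite indicE memNset // mulr0.
Qed.

Lemma expect_on_evN (Z f : T -> R) (g : bool -> R) n :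
  P.-integrable setT (EFin \o Z) -> (forall w, f w = g (X w) * Z w * \1_(evN N n) w) ->
  Ex P f = g true * cell_int Z n true + g false * cell_int Z n false.
Proof.
move=> iZ fE; rewrite (expect_cellwise Z f (fun m x => (m == n)%:R * g x) iZ); last first.
  by move=> w; rewrite fE indic_evN; ring.
by under eq_bigr => m _ do rewrite -!mulrA -mulrDr; rewrite sumr_delta.
Qed.

Lemma expect_on_evX (Z f : T -> R) (g : I -> R) x :
  P.-integrable setT (EFin \o Z) -> (forall w, f w = g (N w) * Z w * \1_(evX X x) w) ->
  Ex P f = \sum_n g n * cell_int Z n x.
Proof.
move=> iZ fE; rewrite (expect_cellwise Z f (fun m x' => (x' == x)%:R * g m) iZ); last first.
  by move=> w; rewrite fE indic_evX; ring.
by apply: eq_bigr => m _; case: x {fE}; rewrite /= ?mul1r ?mul0r ?addr0 ?add0r.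
Qed.

Lemma expect_fun_N (f : I -> R) : Ex P (fun w => f (N w)) = weighted_mean q1 q0 f.
Proof.
rewrite (expect_cellwise _ _ (fun m _ => f m) integrable_cst1) => [|w]; last by rewrite mulr1.
by apply: eq_bigr => n _; rewrite !cell_int1 /cell_weight mulrDr.
Qed.

Lemma Cov_fun_N (f g : I -> R) :
  Cov P (fun w => f (N w)) (fun w => g (N w)) = weighted_cov q1 q0 f g.
Proof.
transitivity (Ex P (fun w => (f (N w) - Ex P (fun w => f (N w)))
                          * (g (N w) - Ex P (fun w => g (N w))))).
  by rewrite /Cov covariance.unlock.
by rewrite (expect_fun_N (fun n => (f n - _) * (g n - _))) !expect_fun_N.
Qed.

Lemma cell_weight_sum : \sum_n cell_weight q1 q0 n = 1.
Proof.
have := expect_fun_N (fun=> 1); rewrite /weighted_mean.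
under eq_bigr => n _ do rewrite mul1r.
by move=> <-; rewrite /Ex (_ : (fun=> 1) = cst 1) // expectation_cst.
Qed.

Lemma integrable_cell_fun (h : I -> bool -> R) :
  P.-integrable setT (EFin \o (fun w => h (N w) (X w))).
Proof.
have i1 n x := integrable_mul_indic_cell (fun=> 1) n x integrable_cst1.
apply: (eq_integrable _ (fun w => (\sum_n (h n true * (1 * \1_(cell n true) w) +
                                           h n false * (1 * \1_(cell n false) w)))%:E)) => //.
  by move=> w _ /=; rewrite -cell_fun_expand mulr1.
under eq_fun => w do rewrite -sumEFin.
apply: (integrable_sum measurableT) => n _.
under eq_fun => w do rewrite EFinD (EFinM (h n true)) (EFinM (h n false)).
by apply: integrableD => //; apply: integrableZl => //; exact: i1.
Qed.

Lemma measurable_cell_fun (h : I -> bool -> R) : measurable_fun setT (fun w => h (N w) (X w)).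
Proof. by have /integrableP[/measurable_EFinP] := integrable_cell_fun h. Qed.

Lemma cell_int_cell_fun (h : I -> bool -> R) n x :
  cell_int (fun w => h (N w) (X w)) n x = h n x * cell_prob n x.
Proof.
rewrite {1}/cell_int (expect_cellwise _ _ (fun m x' => (m == n)%:R * ((x' == x)%:R * h m x'))
  integrable_cst1).
  under eq_bigr => m _ do rewrite !cell_int1 -!mulrA -mulrDr.
  by rewrite sumr_delta; case: x; rewrite /= ?mul0r ?mul1r ?add0r ?addr0.
move=> w; rewrite indic_cell mulr1.
by case: (X w == x); case: (N w == n); rewrite /= ?mulr0 ?mul0r ?mul1r ?mulr1.
Qed.

Lemma Pr_evX x : Pr P (evX X x) = \sum_n cell_prob n x.
Proof.
rewrite Pr_expect // (expect_on_evX (fun=> 1) _ (fun=> 1) x integrable_cst1) => [|w].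
  by apply: eq_bigr => n _; rewrite mul1r cell_int1.
by rewrite !mul1r.
Qed.

Lemma condE_evX (Z f : T -> R) (g : I -> R) x :
  P.-integrable setT (EFin \o Z) -> (forall w, f w = g (N w) * Z w) ->
  condE P (evX X x) f = (\sum_n g n * cell_int Z n x) / \sum_n cell_prob n x.
Proof. by move=> iZ fE; rewrite /condE Pr_evX (expect_on_evX Z _ g x iZ) // => w; rewrite fE. Qed.

Lemma p_cellE : p_ P N = cell_weight q1 q0.
Proof.
apply: funext => n; rewrite /p_ Pr_expect //.
rewrite (expect_on_evN (fun=> 1) _ (fun=> 1) n integrable_cst1) => [|w]; last by rewrite !mul1r.
by rewrite !cell_int1 !mul1r.
Qed.

Lemma X_cellE : X_ P X N = cell_share q1 q0.
Proof.
apply: funext => n; rewrite /X_ /condE -/(p_ P N n) p_cellE.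
rewrite (expect_on_evN (fun=> 1) _ (fun x : bool => x%:R) n integrable_cst1) => [|w].
  by rewrite !cell_int1 mul1r mul0r addr0.
by rewrite mulr1.
Qed.

Lemma Ex_Xr : Ex P (Xr X) = mass1 q1.
Proof.
rewrite (expect_cellwise _ _ (fun _ x => x%:R) integrable_cst1) => [|w]; last by rewrite mulr1.
by apply: eq_bigr => n _; rewrite !cell_int1 mul1r mul0r addr0.
Qed.

Lemma Var_Xr : Var P (Xr X) = mass1 q1 * (1 - mass1 q1).
Proof.
pose m := mass1 q1.
transitivity (Ex P (fun w => (Xr X w - m) * (Xr X w - m))).
  by rewrite /m -Ex_Xr (_ : Var P _ = Cov P (Xr X) (Xr X)) // /Cov covariance.unlock.
rewrite (expect_cellwise _ _ (fun _ x => (x%:R - m) * (x%:R - m)) integrable_cst1) => [|w];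
  last by rewrite mulr1.
under eq_bigr => n _ do rewrite !cell_int1.
rewrite big_split /= -!mulr_sumr (mass0E cell_weight_sum) -/m.
by rewrite /m /mass1; ring.
Qed.

Section Response.
Context {Y : T -> R}.
Hypothesis iY : P.-integrable setT (EFin \o Y).

Local Notation s1 := (cell_int Y ^~ true).
Local Notation s0 := (cell_int Y ^~ false).

Lemma Y_cellE : Y_ P Y N = cell_mean q1 q0 s1 s0.
Proof.
apply: funext => n; rewrite /Y_ /condE -/(p_ P N n) p_cellE.
by rewrite (expect_on_evN Y _ (fun=> 1) n iY) => [|w]; rewrite ?mul1r.
Qed.

Lemma Ex_Y : Ex P Y = total s1 s0.
Proof.
rewrite (expect_cellwise Y _ (fun _ _ => 1) iY) => [|w]; last by rewrite mul1r.
by apply: eq_bigr => n _; rewrite !mul1r.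
Qed.

Lemma Dpar_cellE : Dpar P X Y = diff_means q1 q0 s1 s0.
Proof.
rewrite /Dpar !(condE_evX Y Y (fun=> 1) _ iY) => [|w|w]; rewrite ?mul1r //.
by rewrite /diff_means; congr (_ / _ - _ / _); apply: eq_bigr => n _; rewrite mul1r.
Qed.

Lemma deltaW_cellE : deltaW P X Y N = within_cov q1 q0 s1 s0.
Proof.
have condCov_cell x :
    condCov P (evX X x) Y (XN P X N) = group_cov q1 q0 (cell_prob ^~ x) (cell_int Y ^~ x).
  rewrite /condCov (condE_evX Y _ (X_ P X N) x iY) => [|w]; last by rewrite mulrC.
  rewrite (condE_evX Y Y (fun=> 1) x iY) => [|w]; last by rewrite mul1r.
  rewrite (condE_evX (fun=> 1) _ (X_ P X N) x integrable_cst1) => [|w]; last by rewrite mulr1.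
  rewrite X_cellE /group_cov; congr (_ - _ / _ * (_ / _)).
    by apply: eq_bigr => n _; rewrite mul1r.
  by apply: eq_bigr => n _; rewrite cell_int1.
rewrite /deltaW (expect_cellwise _ _ (fun _ x => condCov P (evX X x) Y (XN P X N)) integrable_cst1);
  last by move=> w; rewrite mulr1.
rewrite big_split /= -!mulr_sumr !condCov_cell /within_cov.
by congr (_ * _ + _ * _); apply: eq_bigr => n _; rewrite cell_int1.
Qed.

Variables (Ylow Yhigh : R).

Lemma D_MOB_plus_cellE : D_MOB_plus P X Y N Ylow Yhigh =
  slope_at q1 s1 s0 (weighted_mean q1 q0 (mob_plus_term Ylow Yhigh q1 q0 s1 s0)).
Proof.
rewrite /D_MOB_plus /YN /XN Y_cellE X_cellE Var_Xr Ex_Xr Ex_Y.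
by rewrite -expect_fun_N.
Qed.

Lemma D_MOB_minus_cellE : D_MOB_minus P X Y N Ylow Yhigh =
  slope_at q1 s1 s0 (total s1 s0 - weighted_mean q1 q0 (mob_minus_term Ylow Yhigh q1 q0 s1 s0)).
Proof.
rewrite /D_MOB_minus /YN /XN Y_cellE X_cellE Var_Xr Ex_Xr Ex_Y.
by rewrite -expect_fun_N /slope_at; congr (_ / _); ring.
Qed.

End Response.
End Cells.

Section Standing.
Context {R : realType} {I : finType} {d : measure_display} {T : measurableType d}.
Context {P : probability T R} {X : T -> bool} {Y : T -> R} {N : T -> I} {Ylow Yhigh : R}.
Hypothesis st : standing P X Y N Ylow Yhigh.

Local Notation q1 := (cell_prob P X N ^~ true).
Local Notation q0 := (cell_prob P X N ^~ false).
Local Notation s1 := (cell_int P X N Y ^~ true).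
Local Notation s0 := (cell_int P X N Y ^~ false).

Let mX : forall x, measurable (evX X x). Proof. by case: st. Qed.
Let mN : forall n, measurable (evN N n). Proof. by case: st. Qed.
Let mY : measurable_fun setT Y. Proof. by case: st. Qed.
Let iY : P.-integrable setT (EFin \o Y). Proof. by case: st. Qed.

Let q_ge0 x n : 0 <= cell_prob P X N n x. Proof. exact: cell_prob_ge0. Qed.
Let weight_sum : \sum_n cell_weight q1 q0 n = 1. Proof. exact: cell_weight_sum. Qed.

Lemma cell_int_bound x n :
  Ylow * cell_prob P X N n x <= cell_int P X N Y n x <= Yhigh * cell_prob P X N n x.
Proof.
have [q_eq0|q_ne0] := eqVneq (cell_prob P X N n x) 0.
  by rewrite q_eq0 (cell_int_null P mX mN _ _ _ mY q_eq0) !mulr0 lexx.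
have q_gt0 : 0 < cell_prob P X N n x by rewrite lt0r q_ne0 q_ge0.
case: st => _ _ _ _ [_ _ /(_ x n q_gt0)].
by rewrite -[condE _ _ _]/(cell_int P X N Y n x / cell_prob P X N n x) ler_pdivlMr // ler_pdivrMr.
Qed.

Lemma mass1_between : 0 < mass1 q1 < 1.
Proof.
have [n0 [p_gt0 /andP[x_gt0 x_lt1]]] : exists n, 0 < p_ P N n /\ 0 < X_ P X N n < 1.
  by case: st => _ _ _ _ [].
rewrite (p_cellE P mX mN) /cell_weight in p_gt0.
rewrite (X_cellE P mX mN) /cell_share /cell_weight in x_gt0 x_lt1.
rewrite pmulr_lgt0 ?invr_gt0 // in x_gt0.
rewrite ltr_pdivrMr // mul1r ltrDl in x_lt1.
have term_le_sum (F : I -> R) n : (forall m, 0 <= F m) -> F n <= \sum_m F m.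
  by move=> F_ge0; rewrite (bigD1 n) //= lerDl sumr_ge0.
have := term_le_sum _ n0 (q_ge0 true); have := term_le_sum _ n0 (q_ge0 false).
by rewrite (mass0E weight_sum) /mass1 => ? ?; apply/andP; split; lra.
Qed.

Lemma covariance_decomposition :
  Cov P (YN P Y N) (XN P X N) = Dpar P X Y * Var P (XN P X N) + deltaW P X Y N.
Proof.
rewrite -[Var P _]/(Cov P (XN P X N) (XN P X N)) /YN /XN (Y_cellE P mX mN iY) (X_cellE P mX mN).
rewrite !(Cov_fun_N P mX mN) (Dpar_cellE P mX mN iY) (deltaW_cellE P mX mN iY).
exact: (cov_decomposition (q_ge0 true) (q_ge0 false) (cell_int_bound true) (cell_int_bound false)
          weight_sum mass1_between).
Qed.

Let mob_lower :=
  mob_lower_cells (q_ge0 true) (q_ge0 false) (cell_int_bound true) (cell_int_bound false).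
Let mob_upper :=
  mob_upper_cells (q_ge0 true) (q_ge0 false) (cell_int_bound true) (cell_int_bound false).

Lemma Dpar_MOB_bounds :
  D_MOB_minus P X Y N Ylow Yhigh <= Dpar P X Y <= D_MOB_plus P X Y N Ylow Yhigh.
Proof.
rewrite (D_MOB_minus_cellE P mX mN iY) (D_MOB_plus_cellE P mX mN iY) (Dpar_cellE P mX mN iY).
rewrite mob_lower mob_upper subKr (diff_meansE weight_sum mass1_between).
rewrite !ler_slope_at ?mass1_between //.
apply/andP; split; apply: ler_sum => n _.
  exact: (cell_lo_le_s1 (cell_int_bound true) (cell_int_bound false)).
exact: (s1_le_cell_hi (cell_int_bound true) (cell_int_bound false)).
Qed.

Lemma realize_cell_ints (s : I -> bool -> R) :
  (forall n x, Ylow * cell_prob P X N n x <= s n x <= Yhigh * cell_prob P X N n x) ->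
  exists Y' : T -> R,
    standing P X Y' N Ylow Yhigh /\ forall n x, cell_int P X N Y' n x = s n x.
Proof.
(* on a null cell [s n x] is forced to be 0, so dividing by its mass is harmless *)
move=> s_bound; pose h n x := s n x / cell_prob P X N n x.
have cell_int_h n x : cell_int P X N (fun w => h (N w) (X w)) n x = s n x.
  rewrite (cell_int_cell_fun P mX mN) /h.
  have [q_eq0|q_ne0] := eqVneq (cell_prob P X N n x) 0; last by rewrite divfK.
  by move: (s_bound n x); rewrite q_eq0 !mulr0 => /andP[? ?]; lra.
exists (fun w => h (N w) (X w)); split => //.
case: st => _ _ _ _ [ex_n Ylow_le _]; split => //.
- exact: measurable_cell_fun.
- exact: integrable_cell_fun.
split => // x n q_gt0.
rewrite -[condE _ _ _]/(cell_int P X N (fun w => h (N w) (X w)) n x / cell_prob P X N n x).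
by rewrite cell_int_h ler_pdivlMr // ler_pdivrMr.
Qed.

Lemma Dpar_attains D0 :
  D_MOB_minus P X Y N Ylow Yhigh <= D0 <= D_MOB_plus P X Y N Ylow Yhigh ->
  exists Y' : T -> R, [/\ standing P X Y' N Ylow Yhigh, Y_ P Y' N = Y_ P Y N & Dpar P X Y' = D0].
Proof.
rewrite (D_MOB_minus_cellE P mX mN iY) (D_MOB_plus_cellE P mX mN iY) mob_lower mob_upper subKr.
pose t := D0 * (mass1 q1 * (1 - mass1 q1)) + mass1 q1 * total s1 s0.
have tK : slope_at q1 s1 s0 t = D0 by apply: slope_atK; exact: mass1_between.
rewrite -{1 2}tK !ler_slope_at ?mass1_between // => t_between.
have [s1' [s0' [s1'_bound s0'_bound s_sum s1'_sum]]] :=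
  cell_split_between (cell_int_bound true) (cell_int_bound false) _ t_between.
have [|Y' [st' Y'_cells]] := realize_cell_ints (fun n x => if x then s1' n else s0' n).
  by move=> n [].
have [Y'1 Y'0] : cell_int P X N Y' ^~ true = s1' /\ cell_int P X N Y' ^~ false = s0'.
  by split; apply: funext => n; rewrite Y'_cells.
have iY' : P.-integrable setT (EFin \o Y') by case: st'.
exists Y'; split => //.
- rewrite !(Y_cellE P mX mN) // Y'1 Y'0; apply: funext => n.
  by rewrite /cell_mean; congr (_ / _); exact: s_sum.
- rewrite (Dpar_cellE P mX mN iY') Y'1 Y'0 (diff_meansE (q1 := q1) weight_sum mass1_between).
  rewrite s1'_sum -tK /slope_at; congr ((_ - _ * _) / _).
  by apply: eq_bigr => n _; exact: s_sum.
Qed.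

Lemma D_ER_Dpar : 0 < Var P (XN P X N) ->
  D_ER P X Y N = Dpar P X Y + deltaW P X Y N / Var P (XN P X N).
Proof. by move=> V_gt0; rewrite /D_ER covariance_decomposition mulrDl mulfK ?gt_eqF. Qed.

Lemma deltaW_ge0E : 0 < Var P (XN P X N) ->
  (0 <= deltaW P X Y N) = (Dpar P X Y <= D_ER P X Y N).
Proof. by move=> V_gt0; rewrite D_ER_Dpar // lerDl pmulr_lge0 ?invr_gt0. Qed.

Lemma deltaW_le0E : 0 < Var P (XN P X N) ->
  (deltaW P X Y N <= 0) = (D_ER P X Y N <= Dpar P X Y).
Proof. by move=> V_gt0; rewrite D_ER_Dpar // gerDl pmulr_lle0 ?invr_gt0. Qed.

End Standing.

Theorem proposition5 (R : realType) (I : finType) (d : measure_display)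
  (T : measurableType d) (P : probability T R)
  (X : T -> bool) (Y : T -> R) (N : T -> I) (Ylow Yhigh : R) :
  standing P X Y N Ylow Yhigh ->
  0 < Var P (XN P X N) ->
  [/\
    (* (i) *)
    (0 <= deltaW P X Y N ->
       D_MOB_minus P X Y N Ylow Yhigh <= Dpar P X Y
       <= Num.min (D_MOB_plus P X Y N Ylow Yhigh) (D_ER P X Y N)),
    (* (ii) *)
    (deltaW P X Y N <= 0 ->
       Num.max (D_MOB_minus P X Y N Ylow Yhigh) (D_ER P X Y N) <= Dpar P X Y
       <= D_MOB_plus P X Y N Ylow Yhigh),
    (* (iii) sharpness of (i) *)
    (forall D0 : R,
       D_MOB_minus P X Y N Ylow Yhigh <= D0
       <= Num.min (D_MOB_plus P X Y N Ylow Yhigh) (D_ER P X Y N) ->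
       exists (d' : measure_display) (T' : measurableType d')
              (P' : probability T' R) (X' : T' -> bool) (Y' : T' -> R)
              (N' : T' -> I),
         [/\ standing P' X' Y' N' Ylow Yhigh,
             (forall n, [/\ p_ P' N' n = p_ P N n,
                            X_ P' X' N' n = X_ P X N n &
                            Y_ P' Y' N' n = Y_ P Y N n]),
             0 <= deltaW P' X' Y' N' &
             Dpar P' X' Y' = D0]) &
    (* (iii) sharpness of (ii) *)
    (forall D0 : R,
       Num.max (D_MOB_minus P X Y N Ylow Yhigh) (D_ER P X Y N) <= D0
       <= D_MOB_plus P X Y N Ylow Yhigh ->
       exists (d' : measure_display) (T' : measurableType d')
              (P' : probability T' R) (X' : T' -> bool) (Y' : T' -> R)
              (N' : T' -> I),
         [/\ standing P' X' Y' N' Ylow Yhigh,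
             (forall n, [/\ p_ P' N' n = p_ P N n,
                            X_ P' X' N' n = X_ P X N n &
                            Y_ P' Y' N' n = Y_ P Y N n]),
             deltaW P' X' Y' N' <= 0 &
             Dpar P' X' Y' = D0])].
Proof.
move=> st V_gt0; have /andP[lo_D D_hi] := Dpar_MOB_bounds st.
have D_ER_eq Y' : Y_ P Y' N = Y_ P Y N -> D_ER P X Y' N = D_ER P X Y N.
  by rewrite /D_ER /YN => ->.
split.
- by rewrite (deltaW_ge0E st V_gt0) => D_ER_ge; rewrite lo_D le_min D_hi.
- by rewrite (deltaW_le0E st V_gt0) => D_ER_le; rewrite ge_max lo_D D_ER_le.
- move=> D0 /andP[lo_D0]; rewrite le_min => /andP[D0_hi D0_ER].
  have [|Y' [st' eY eD]] := Dpar_attains st D0; first by rewrite lo_D0.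
  exists d, T, P, X, Y', N; split => //; first by move=> n; rewrite eY.
  by rewrite (deltaW_ge0E st' V_gt0) eD D_ER_eq.
- move=> D0 /andP[]; rewrite ge_max => /andP[lo_D0 ER_D0] D0_hi.
  have [|Y' [st' eY eD]] := Dpar_attains st D0; first by rewrite lo_D0.
  exists d, T, P, X, Y', N; split => //; first by move=> n; rewrite eY.
  by rewrite (deltaW_le0E st' V_gt0) eD D_ER_eq.
Qed.
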